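(* Let $x\in(0,\infty)$. The unique default ABMN solution with central ratio $\frac{n_{-1}-n_0}{m_0-m_{-1}}=x$ is $\{(a^{\rm def}_i(x),b^{\rm def}_i(x),m^{\rm def}_i(x),n^{\rm def}_i(x)):i\in\mathbb{Z}\}$, where: $m^{\rm def}(x)$ is the increasing sequence with $\lim_{i\to-\infty}m^{\rm def}_i(x)=0$ and $m^{\rm def}_{k+1}(x)-m^{\rm def}_k(x)=\prod_{i=0}^k(c_i(x)-1)$ for $k\in\mathbb{Z}$; $n^{\rm def}(x)$ is the decreasing sequence with $\lim_{i\to\infty}n^{\rm def}_i(x)=0$ and $n^{\rm def}_k(x)-n^{\rm def}_{k+1}(x)=x\prod_{i=0}^k(d_i(x)-1)$ for $k\in\mathbb{Z}$; and, with $M_i=m^{\rm def}_{i+1}(x)-m^{\rm def}_{i-1}(x)$, $N_i=n^{\rm def}_{i-1}(x)-n^{\rm def}_{i+1}(x)$, $a^{\rm def}_i(x)=\frac{M_i^2N_i}{(M_i+N_i)^2}$ and $b^{\rm def}_i(x)=\frac{M_iN_i^2}{(M_i+N_i)^2}$.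
   Context: ABMN system on $\mathbb{Z}$: real variables $a_i,b_i\ge0$, $m_i,n_i$ with, for all $i$, $(a_i+b_i)(m_i+a_i)=a_im_{i+1}+b_im_{i-1}$, $(a_i+b_i)(n_i+b_i)=a_in_{i+1}+b_in_{i-1}$, $(a_i+b_i)^2=b_i(m_{i+1}-m_{i-1})$, $(a_i+b_i)^2=a_i(n_{i-1}-n_{i+1})$. A solution is positive if all $a_i,b_i>0$; default if positive with $\lim_{i\to-\infty}m_i=0$, $\lim_{i\to\infty}n_i=0$, $m_0-m_{-1}=1$. Functions: for $x>0$ let $\omega=\sqrt{8x+1}$, $c(x)=\frac{(\omega+3)^2}{16}$, $d(x)=\frac{(\omega+3)^2}{8(\omega+1)}$, $s(x)=\frac{(\omega-1)^2}{4(\omega+7)}$. Let $s_{-1}(x)=1/s(1/x)$, $s_0(x)=x$, and for $i\in\mathbb{N}_+$, $s_i=s\circ s_{i-1}$, $s_{-i}=s_{-1}\circ s_{-(i-1)}$. Set $c_j=c\circ s_j$, $d_j=d\circ s_j$ for $j\in\mathbb{Z}$. Product convention: $\prod_{i=0}^k h_i=h_0\cdots h_k$ for $k\ge0$, $=1$ for $k=-1$, and $=h_{k+1}^{-1}\cdots h_{-1}^{-1}$ for $k\le-2$. *)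

From Stdlib Require Import Reals Lra ZArith.
From Coquelicot Require Import Coquelicot.
Open Scope R_scope.

Definition omega (x : R) : R := sqrt (8 * x + 1).
Definition cfun (x : R) : R := (omega x + 3) ^ 2 / 16.
Definition dfun (x : R) : R := (omega x + 3) ^ 2 / (8 * (omega x + 1)).
Definition sfun (x : R) : R := (omega x - 1) ^ 2 / (4 * (omega x + 7)).
Definition sm1 (x : R) : R := / sfun (/ x).

(** s_j for j : Z : s_0 = id, s_i = s o s_{i-1}, s_{-i} = s_{-1} o s_{-(i-1)}. *)
Definition s_iter (j : Z) (x : R) : R :=
  match j with
  | Z0 => x
  | Zpos p => Nat.iter (Pos.to_nat p) sfun x
  | Zneg p => Nat.iter (Pos.to_nat p) sm1 x
  end.

Definition c_j (j : Z) (x : R) : R := cfun (s_iter j x).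
Definition d_j (j : Z) (x : R) : R := dfun (s_iter j x).

Fixpoint prod_up (h : nat -> R) (n : nat) : R :=
  match n with
  | O => 1
  | S n' => prod_up h n' * h n'
  end.

(** Product convention: zprod h k = h_0...h_k (k >= 0), 1 (k = -1),
    h_{k+1}^{-1} ... h_{-1}^{-1} (k <= -2). *)
Definition zprod (h : Z -> R) (k : Z) : R :=
  match k with
  | Z0 => prod_up (fun i => h (Z.of_nat i)) 1
  | Zpos p => prod_up (fun i => h (Z.of_nat i)) (S (Pos.to_nat p))
  | Zneg p => prod_up (fun i => / h (- Z.of_nat (S i))%Z) (Pos.to_nat p - 1)
  end.

Definition ABMN (a b m n : Z -> R) : Prop :=
  forall i : Z,
    0 <= a i /\ 0 <= b i /\
    (a i + b i) * (m i + a i) = a i * m (i + 1)%Z + b i * m (i - 1)%Z /\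
    (a i + b i) * (n i + b i) = a i * n (i + 1)%Z + b i * n (i - 1)%Z /\
    (a i + b i) ^ 2 = b i * (m (i + 1)%Z - m (i - 1)%Z) /\
    (a i + b i) ^ 2 = a i * (n (i - 1)%Z - n (i + 1)%Z).

Definition positive_sol (a b m n : Z -> R) : Prop :=
  ABMN a b m n /\ forall i, 0 < a i /\ 0 < b i.

Definition lim_pinf (u : Z -> R) (l : R) : Prop :=
  is_lim_seq (fun k : nat => u (Z.of_nat k)) l.
Definition lim_minf (u : Z -> R) (l : R) : Prop :=
  is_lim_seq (fun k : nat => u (- Z.of_nat k)%Z) l.

Definition default_sol (a b m n : Z -> R) : Prop :=
  positive_sol a b m n /\ lim_minf m 0 /\ lim_pinf n 0 /\
  m 0%Z - m (-1)%Z = 1.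

Definition central_ratio (m n : Z -> R) : R :=
  (n (-1)%Z - n 0%Z) / (m 0%Z - m (-1)%Z).

Definition is_mdef (x : R) (m : Z -> R) : Prop :=
  (forall k, m k < m (k + 1)%Z) /\ lim_minf m 0 /\
  forall k, m (k + 1)%Z - m k = zprod (fun i => c_j i x - 1) k.

Definition is_ndef (x : R) (n : Z -> R) : Prop :=
  (forall k, n (k + 1)%Z < n k) /\ lim_pinf n 0 /\
  forall k, n k - n (k + 1)%Z = x * zprod (fun i => d_j i x - 1) k.

Definition ab_from_mn (a b m n : Z -> R) : Prop :=
  forall i,
    let M := m (i + 1)%Z - m (i - 1)%Z in
    let N := n (i - 1)%Z - n (i + 1)%Z in
    a i = M ^ 2 * N / (M + N) ^ 2 /\ b i = M * N ^ 2 / (M + N) ^ 2.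

From Stdlib Require Import Reals ZArith Lra Lia Psatz FunctionalExtensionality.
From Coquelicot Require Import Coquelicot.
Open Scope R_scope.

(* Every y > 0 is y = r + 2 r^2 with r = (omega y - 1)/4 > 0, and then
   c(y) = (1+r)^2, d(y) = (1+r)^2/(1+2r) and s(y) = r^2/(2+r).
   At a site with a, b > 0 the ABMN equations are a linear system for the four
   neighbouring increments; its solution is m_i - m_{i-1} = a^2/b,
   m_{i+1} - m_i = b + 2a, n_{i-1} - n_i = a + 2b, n_i - n_{i+1} = b^2/a.
   With r = b/a this says that the local ratio y_i = (n_{i-1} - n_i)/(m_i - m_{i-1})
   is r + 2r^2, that the increments of m and n get multiplied by c(y_i) - 1 and
   d(y_i) - 1, and that y_{i+1} = s(y_i). So in a default solution y_i = s_i(x),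
   the increments are the products of the statement, and the limits at -oo and +oo
   recover m and n from them. Conversely, since s(y) < y/2 these products are
   summable in the relevant direction, and their partial sums solve the system. *)

Lemma Z_ind_both (P : Z -> Prop) (z : Z) :
  P z -> (forall k, P k <-> P (k + 1)%Z) -> forall k, P k.
Proof.
  intros Hz Hs k. replace k with (z + (k - z))%Z by ring.
  apply (Z.peano_ind (fun j => P (z + j)%Z)).
  - now rewrite Z.add_0_r.
  - intros j Hj. rewrite Z.add_succ_r, <- Z.add_1_r. exact (proj1 (Hs _) Hj).
  - intros j Hj. apply (proj2 (Hs _)). now replace (z + Z.pred j + 1)%Z with (z + j)%Z by lia.
Qed.

Lemma Z_of_nat_or_neg (j : Z) :
  (exists n, j = Z.of_nat n) \/ (exists n, j = - Z.of_nat (S n))%Z.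
Proof.
  destruct (Z_le_gt_dec 0 j).
  - left. exists (Z.to_nat j). lia.
  - right. exists (Z.to_nat (- j - 1)). lia.
Qed.

(** * The functions c, d, s *)

Lemma omega_quad r : 0 < r -> omega (r + 2 * r ^ 2) = 4 * r + 1.
Proof.
  intros Hr. unfold omega.
  replace (8 * (r + 2 * r ^ 2) + 1) with ((4 * r + 1) ^ 2) by ring.
  apply sqrt_pow2. lra.
Qed.

Lemma quad_param y : 0 < y -> exists r, 0 < r /\ y = r + 2 * r ^ 2.
Proof.
  intros Hy. set (w := sqrt (8 * y + 1)).
  assert (Hw : 1 < w) by (rewrite <- sqrt_1; apply sqrt_lt_1; lra).
  assert (Hww : w * w = 8 * y + 1) by (apply sqrt_sqrt; lra).
  exists ((w - 1) / 4). split; nra.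
Qed.

Lemma cfun_quad r : 0 < r -> cfun (r + 2 * r ^ 2) = (1 + r) ^ 2.
Proof. intros Hr. unfold cfun. rewrite omega_quad by lra. field. Qed.

Lemma dfun_quad r : 0 < r -> dfun (r + 2 * r ^ 2) = (1 + r) ^ 2 / (1 + 2 * r).
Proof. intros Hr. unfold dfun. rewrite omega_quad by lra. field. lra. Qed.

Lemma sfun_quad r : 0 < r -> sfun (r + 2 * r ^ 2) = r ^ 2 / (2 + r).
Proof. intros Hr. unfold sfun. rewrite omega_quad by lra. field. lra. Qed.

Lemma sfun_gt0 y : 0 < y -> 0 < sfun y.
Proof.
  intros Hy. destruct (quad_param y Hy) as [r [Hr ->]].
  rewrite sfun_quad by lra. apply Rdiv_lt_0_compat; nra.
Qed.

Lemma sfun_lt_half y : 0 < y -> sfun y < y / 2.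
Proof.
  intros Hy. destruct (quad_param y Hy) as [r [Hr ->]]. rewrite sfun_quad by lra.
  apply Rmult_lt_reg_r with (2 + r); [lra|].
  unfold Rdiv. rewrite Rmult_assoc, Rinv_l by lra. nra.
Qed.

(* In terms of r this is the symmetry r <-> 1/r. *)
Lemma sfun_inv_sfun z : 0 < z -> sfun (/ sfun z) = / z.
Proof.
  intros Hz. destruct (quad_param z Hz) as [r [Hr ->]]. rewrite sfun_quad by lra.
  replace (/ (r ^ 2 / (2 + r))) with (/ r + 2 * (/ r) ^ 2) by (field; lra).
  rewrite sfun_quad by (apply Rinv_0_lt_compat; lra). field. lra.
Qed.

Lemma sm1_sfun z : 0 < z -> sm1 (sfun z) = z.
Proof. intros Hz. unfold sm1. rewrite sfun_inv_sfun by exact Hz. apply Rinv_inv. Qed.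

Lemma sfun_sm1 y : 0 < y -> sfun (sm1 y) = y.
Proof.
  intros Hy. unfold sm1. rewrite sfun_inv_sfun by (apply Rinv_0_lt_compat; exact Hy).
  apply Rinv_inv.
Qed.

Lemma sm1_gt0 y : 0 < y -> 0 < sm1 y.
Proof. intros Hy. apply Rinv_0_lt_compat, sfun_gt0, Rinv_0_lt_compat, Hy. Qed.

Lemma sfun_inj y z : 0 < y -> 0 < z -> sfun y = sfun z -> y = z.
Proof. intros Hy Hz E. rewrite <- (sm1_sfun y), <- (sm1_sfun z), E by assumption. reflexivity. Qed.

Lemma cfun_sub1_gt0 y : 0 < y -> 0 < cfun y - 1.
Proof. intros Hy. destruct (quad_param y Hy) as [r [Hr ->]]. rewrite cfun_quad by lra. nra. Qed.

Lemma cfun_sub1_ge_half y : 0 < y -> y / 2 <= cfun y - 1.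
Proof. intros Hy. destruct (quad_param y Hy) as [r [Hr ->]]. rewrite cfun_quad by lra. nra. Qed.

Lemma dfun_sub1_quad r : 0 < r -> dfun (r + 2 * r ^ 2) - 1 = r ^ 2 / (1 + 2 * r).
Proof. intros Hr. rewrite dfun_quad by lra. field. lra. Qed.

Lemma dfun_sub1_gt0 y : 0 < y -> 0 < dfun y - 1.
Proof.
  intros Hy. destruct (quad_param y Hy) as [r [Hr ->]].
  rewrite dfun_sub1_quad by lra. apply Rdiv_lt_0_compat; nra.
Qed.

Lemma dfun_sub1_le y : 0 < y -> dfun y - 1 <= y.
Proof.
  intros Hy. destruct (quad_param y Hy) as [r [Hr ->]]. rewrite dfun_sub1_quad by lra.
  apply Rmult_le_reg_r with (1 + 2 * r); [lra|].
  unfold Rdiv. rewrite Rmult_assoc, Rinv_l by lra. nra.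
Qed.

Lemma dfun_cfun_sfun y : 0 < y -> y * (dfun y - 1) = (cfun y - 1) * sfun y.
Proof.
  intros Hy. destruct (quad_param y Hy) as [r [Hr ->]].
  rewrite dfun_quad, cfun_quad, sfun_quad by lra. field. lra.
Qed.

Lemma s_iter_of_nat n x : s_iter (Z.of_nat n) x = Nat.iter n sfun x.
Proof. destruct n; [reflexivity|]. simpl. now rewrite SuccNat2Pos.id_succ. Qed.

Lemma s_iter_opp_nat n x : s_iter (- Z.of_nat n) x = Nat.iter n sm1 x.
Proof. destruct n; [reflexivity|]. simpl. now rewrite SuccNat2Pos.id_succ. Qed.

Lemma s_iter_gt0 j x : 0 < x -> 0 < s_iter j x.
Proof.
  intros Hx. destruct (Z_of_nat_or_neg j) as [[n ->]|[n ->]].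
  - rewrite s_iter_of_nat. induction n; simpl; auto using sfun_gt0.
  - rewrite s_iter_opp_nat. induction (S n); simpl; auto using sm1_gt0.
Qed.

Lemma s_iter_succ j x : 0 < x -> s_iter (j + 1) x = sfun (s_iter j x).
Proof.
  intros Hx. destruct (Z_of_nat_or_neg j) as [[n ->]|[n ->]].
  - replace (Z.of_nat n + 1)%Z with (Z.of_nat (S n)) by lia.
    now rewrite !s_iter_of_nat.
  - replace (- Z.of_nat (S n) + 1)%Z with (- Z.of_nat n)%Z by lia.
    rewrite !s_iter_opp_nat. simpl. rewrite sfun_sm1; [reflexivity|].
    rewrite <- s_iter_opp_nat. now apply s_iter_gt0.
Qed.

Lemma s_iter_add_le j t x : 0 < x -> s_iter (j + Z.of_nat t) x <= s_iter j x * (/ 2) ^ t.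
Proof.
  intros Hx. induction t as [|t IH].
  - rewrite Z.add_0_r. simpl. lra.
  - replace (j + Z.of_nat (S t))%Z with (j + Z.of_nat t + 1)%Z by lia.
    rewrite s_iter_succ by exact Hx.
    pose proof (sfun_lt_half _ (s_iter_gt0 (j + Z.of_nat t) x Hx)).
    simpl. lra.
Qed.

Lemma s_iter_sub_ge j t x : 0 < x -> s_iter j x * 2 ^ t <= s_iter (j - Z.of_nat t) x.
Proof.
  intros Hx. induction t as [|t IH].
  - rewrite Z.sub_0_r. simpl. lra.
  - pose proof (s_iter_succ (j - Z.of_nat (S t)) x Hx) as E.
    replace (j - Z.of_nat (S t) + 1)%Z with (j - Z.of_nat t)%Z in E by lia.
    pose proof (sfun_lt_half _ (s_iter_gt0 (j - Z.of_nat (S t)) x Hx)).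
    change (2 ^ S t) with (2 * 2 ^ t). lra.
Qed.

Lemma zprod_of_nat h n : zprod h (Z.of_nat n) = prod_up (fun i => h (Z.of_nat i)) (S n).
Proof. destruct n; [reflexivity|]. simpl. now rewrite SuccNat2Pos.id_succ. Qed.

Lemma zprod_opp_nat h n :
  zprod h (- Z.of_nat (S n)) = prod_up (fun i => / h (- Z.of_nat (S i))%Z) n.
Proof. simpl. rewrite SuccNat2Pos.id_succ. simpl. now rewrite Nat.sub_0_r. Qed.

Lemma zprod_succ h k : (forall i, h i <> 0) -> zprod h (k + 1) = zprod h k * h (k + 1)%Z.
Proof.
  intros Hh. destruct (Z_of_nat_or_neg k) as [[n ->]|[[|n] ->]].
  - replace (Z.of_nat n + 1)%Z with (Z.of_nat (S n)) by lia.
    now rewrite !zprod_of_nat.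
  - reflexivity.
  - replace (- Z.of_nat (S (S n)) + 1)%Z with (- Z.of_nat (S n))%Z by lia.
    rewrite !zprod_opp_nat. simpl. field. apply Hh.
Qed.

Lemma prod_up_gt0 h n : (forall i, 0 < h i) -> 0 < prod_up h n.
Proof. intros Hh. induction n; simpl; [lra|]. now apply Rmult_lt_0_compat. Qed.

Lemma zprod_gt0 h k : (forall i, 0 < h i) -> 0 < zprod h k.
Proof.
  intros Hh. destruct (Z_of_nat_or_neg k) as [[n ->]|[n ->]].
  - rewrite zprod_of_nat. now apply prod_up_gt0.
  - rewrite zprod_opp_nat. apply prod_up_gt0. intros i. now apply Rinv_0_lt_compat.
Qed.

Lemma zprod_unique (h f : Z -> R) : (forall i, h i <> 0) ->
  f (-1)%Z = 1 -> (forall k, f (k + 1)%Z = f k * h (k + 1)%Z) -> forall k, f k = zprod h k.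
Proof.
  intros Hh Hf1 Hf. apply (Z_ind_both _ (-1)); [exact Hf1|].
  intros k. rewrite Hf, zprod_succ by exact Hh. split.
  - intros ->. reflexivity.
  - intros E. now apply Rmult_eq_reg_r in E.
Qed.

Lemma ex_series_ratio_vanishing (a : nat -> R) (c : R) :
  (forall n, 0 < a n) -> (forall n, a (S n) / a n <= c * (/ 2) ^ n) -> ex_series a.
Proof.
  intros Ha Hb. apply ex_series_ext with (fun n => Rabs (a n)).
  { intros n. apply Rabs_pos_eq, Rlt_le, Ha. }
  apply ex_series_DAlembert with 0; [lra| intros n; apply Rgt_not_eq, Ha |].
  assert (Hr : forall n, 0 < a (S n) / a n) by (intros n; apply Rdiv_lt_0_compat; apply Ha).
  apply is_lim_seq_le_le with (fun _ => 0) (fun n => c * (/ 2) ^ n).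
  - intros n. rewrite Rabs_pos_eq by apply Rlt_le, Hr. split; [apply Rlt_le, Hr | apply Hb].
  - apply is_lim_seq_const.
  - replace (Finite 0) with (Rbar_mult c 0) by (simpl; now rewrite Rmult_0_r).
    apply is_lim_seq_scal_l, is_lim_seq_geom. rewrite Rabs_pos_eq; lra.
Qed.

Lemma Series_tail_vanishing (a : nat -> R) : ex_series a ->
  is_lim_seq (fun n => Series (fun t => a (n + t)%nat)) 0.
Proof.
  intros Ha. apply is_lim_seq_incr_1.
  apply is_lim_seq_ext with (fun n => Series a - sum_n a n).
  - intros n. rewrite (Series_incr_n a (S n)), sum_n_Reals by (lia || exact Ha).
    simpl pred. ring.
  - rewrite <- (Rminus_eq_0 (Series a)).
    apply is_lim_seq_minus'; [apply is_lim_seq_const | exact (Series_correct a Ha)].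
Qed.

Lemma eq_of_increments (f g : Z -> R) (e : nat -> Z) :
  (forall k, f (k + 1)%Z - f k = g (k + 1)%Z - g k) ->
  is_lim_seq (fun t => f (e t)) 0 -> is_lim_seq (fun t => g (e t)) 0 -> f = g.
Proof.
  intros Hd Hf Hg.
  assert (Hc : forall k, f k - g k = f 0%Z - g 0%Z).
  { apply (Z_ind_both (fun k => f k - g k = f 0%Z - g 0%Z) 0); [reflexivity|].
    intros k. specialize (Hd k). lra. }
  assert (Hlim : is_lim_seq (fun _ : nat => f 0%Z - g 0%Z) 0).
  { apply is_lim_seq_ext with (fun t => f (e t) - g (e t)); [intros t; apply Hc|].
    rewrite <- (Rminus_0_r 0). now apply is_lim_seq_minus'. }
  assert (H0 : f 0%Z - g 0%Z = 0).
  { apply is_lim_seq_unique in Hlim. rewrite Lim_seq_const in Hlim. now injection Hlim. }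
  apply functional_extensionality. intros k. specialize (Hc k). lra.
Qed.

(** * One site of the system *)

Definition site_eqs (A B m0 m m1 n0 n n1 : R) : Prop :=
  (A + B) * (m + A) = A * m1 + B * m0 /\
  (A + B) * (n + B) = A * n1 + B * n0 /\
  (A + B) ^ 2 = B * (m1 - m0) /\
  (A + B) ^ 2 = A * (n0 - n1).

Lemma site_system_solve A B p q : 0 < A -> 0 < B ->
  (A + B) * A = A * p - B * q -> (A + B) ^ 2 = B * (p + q) ->
  q = A ^ 2 / B /\ p = B + 2 * A.
Proof.
  intros HA HB e1 e2.
  assert (Hq : B * (A + B) * q = B * (A + B) * (A ^ 2 / B)).
  { replace (B * (A + B) * (A ^ 2 / B)) with (A * (A + B) ^ 2 - B * ((A + B) * A))
      by (field; lra).
    rewrite e1, e2. ring. }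
  apply Rmult_eq_reg_l in Hq; [|nra].
  split; [exact Hq|]. subst q.
  apply Rmult_eq_reg_l with B; [|lra].
  replace (B * p) with ((A + B) ^ 2 - A ^ 2) by (rewrite e2; field; lra). ring.
Qed.

Lemma site_forward A B m0 m m1 n0 n n1 :
  0 < A -> 0 < B -> site_eqs A B m0 m m1 n0 n n1 ->
  let y := (n0 - n) / (m - m0) in
  0 < m - m0 /\ 0 < y /\
  m1 - m = (m - m0) * (cfun y - 1) /\ n - n1 = (n0 - n) * (dfun y - 1) /\
  A = (m1 - m0) ^ 2 * (n0 - n1) / (m1 - m0 + (n0 - n1)) ^ 2 /\
  B = (m1 - m0) * (n0 - n1) ^ 2 / (m1 - m0 + (n0 - n1)) ^ 2.
Proof.
  intros HA HB [e1 [e2 [e3 e4]]] y.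
  destruct (site_system_solve A B (m1 - m) (m - m0)) as [hq hp];
    [lra | lra | lra | rewrite e3; ring |].
  destruct (site_system_solve B A (n0 - n) (n - n1)) as [hu hv];
    [lra | lra | lra | rewrite Rplus_comm, e4; ring |].
  set (r := B / A). assert (Hr : 0 < r) by (apply Rdiv_lt_0_compat; assumption).
  assert (Hy : y = r + 2 * r ^ 2) by (unfold y, r; rewrite hq, hv; field; lra).
  assert (EM : m1 - m0 = (A + B) ^ 2 / B).
  { replace (m1 - m0) with ((m1 - m) + (m - m0)) by ring. rewrite hp, hq. field. lra. }
  assert (EN : n0 - n1 = (A + B) ^ 2 / A).
  { replace (n0 - n1) with ((n0 - n) + (n - n1)) by ring. rewrite hv, hu. field. lra. }
  assert (HS : 0 < (A + B) ^ 2) by (apply pow_lt; lra).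
  rewrite Hy, cfun_quad, dfun_quad, EM, EN, hq, hp, hu, hv by exact Hr. unfold r.
  repeat split.
  - apply Rdiv_lt_0_compat; nra.
  - nra.
  - field. lra.
  - field. nra.
  - field. repeat split; apply Rgt_not_eq; nra.
  - field. repeat split; apply Rgt_not_eq; nra.
Qed.

Lemma site_backward q y A B m0 m m1 n0 n n1 : 0 < q -> 0 < y ->
  m - m0 = q -> m1 - m = q * (cfun y - 1) ->
  n0 - n = q * y -> n - n1 = q * y * (dfun y - 1) ->
  A = (m1 - m0) ^ 2 * (n0 - n1) / (m1 - m0 + (n0 - n1)) ^ 2 ->
  B = (m1 - m0) * (n0 - n1) ^ 2 / (m1 - m0 + (n0 - n1)) ^ 2 ->
  0 < A /\ 0 < B /\ site_eqs A B m0 m m1 n0 n n1.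
Proof.
  intros Hq Hy h1 h2 h3 h4 hA hB.
  destruct (quad_param y Hy) as [r [Hr ->]].
  rewrite cfun_quad in h2 by exact Hr. rewrite dfun_quad in h4 by exact Hr.
  assert (EM : m1 - m0 = q * (1 + r) ^ 2) by lra.
  assert (EN : n0 - n1 = q * r * (1 + r) ^ 2).
  { replace (n0 - n1) with ((n0 - n) + (n - n1)) by ring. rewrite h3, h4. field. lra. }
  assert (P1 : 0 < q * (1 + r) ^ 2) by (apply Rmult_lt_0_compat; [lra | apply pow_lt; lra]).
  assert (P2 : 0 < q * r * (1 + r) ^ 2) by (apply Rmult_lt_0_compat; [nra | apply pow_lt; lra]).
  rewrite EM, EN in hA, hB.
  assert (HA : A = q * r) by (rewrite hA; field; repeat split; apply Rgt_not_eq; nra).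
  assert (HB : B = q * r ^ 2) by (rewrite hB; field; repeat split; apply Rgt_not_eq; nra).
  assert (em0 : m0 = m - q) by lra.
  assert (em1 : m1 = m + q * ((1 + r) ^ 2 - 1)) by lra.
  assert (en0 : n0 = n + q * (r + 2 * r ^ 2)) by lra.
  assert (en1 : n1 = n - q * (r + 2 * r ^ 2) * ((1 + r) ^ 2 / (1 + 2 * r) - 1)) by lra.
  unfold site_eqs. rewrite HA, HB, em0, em1, en0, en1.
  repeat split; try nra; field; nra.
Qed.

Definition local_ratio (m n : Z -> R) (j : Z) : R :=
  (n (j - 1)%Z - n j) / (m j - m (j - 1)%Z).

Lemma positive_sol_site a b m n j : positive_sol a b m n ->
  let y := local_ratio m n j in
  0 < m j - m (j - 1)%Z /\ 0 < y /\
  m (j + 1)%Z - m j = (m j - m (j - 1)%Z) * (cfun y - 1) /\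
  n j - n (j + 1)%Z = (n (j - 1)%Z - n j) * (dfun y - 1) /\
  a j = (m (j + 1)%Z - m (j - 1)%Z) ^ 2 * (n (j - 1)%Z - n (j + 1)%Z) /
          (m (j + 1)%Z - m (j - 1)%Z + (n (j - 1)%Z - n (j + 1)%Z)) ^ 2 /\
  b j = (m (j + 1)%Z - m (j - 1)%Z) * (n (j - 1)%Z - n (j + 1)%Z) ^ 2 /
          (m (j + 1)%Z - m (j - 1)%Z + (n (j - 1)%Z - n (j + 1)%Z)) ^ 2.
Proof.
  intros [Hsol Hpos]. destruct (Hpos j) as [HA HB].
  destruct (Hsol j) as [_ [_ [e1 [e2 [e3 e4]]]]].
  apply site_forward; [exact HA | exact HB | repeat split; assumption].
Qed.

Lemma positive_sol_ab a b m n : positive_sol a b m n -> ab_from_mn a b m n.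
Proof.
  intros Hsol i. destruct (positive_sol_site a b m n i Hsol) as [_ [_ [_ [_ Hab]]]].
  exact Hab.
Qed.

Lemma local_ratio_succ a b m n j : positive_sol a b m n ->
  local_ratio m n (j + 1) = sfun (local_ratio m n j).
Proof.
  intros Hsol. destruct (positive_sol_site a b m n j Hsol) as [Hq [Hy [Hp [Hu _]]]].
  set (y := local_ratio m n j) in *.
  unfold local_ratio at 1. rewrite Z.add_simpl_r, Hp, Hu.
  apply Rmult_eq_reg_l with (cfun y - 1); [|apply Rgt_not_eq, cfun_sub1_gt0, Hy].
  rewrite <- dfun_cfun_sfun by exact Hy. unfold y, local_ratio.
  field. split; [lra | apply Rgt_not_eq, cfun_sub1_gt0, Hy].
Qed.

(** * The default solution with central ratio x *)

Section DefaultSolution.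

Variable x : R.
Hypothesis x_gt0 : 0 < x.

Definition mstep (k : Z) : R := zprod (fun i => c_j i x - 1) k.
Definition nstep (k : Z) : R := x * zprod (fun i => d_j i x - 1) k.

Definition mdef (k : Z) : R := Series (fun t : nat => mstep (k - 1 - Z.of_nat t)).
Definition ndef (k : Z) : R := Series (fun t : nat => nstep (k + Z.of_nat t)).

Lemma c_j_sub1_gt0 i : 0 < c_j i x - 1.
Proof. apply cfun_sub1_gt0, s_iter_gt0, x_gt0. Qed.

Lemma d_j_sub1_gt0 i : 0 < d_j i x - 1.
Proof. apply dfun_sub1_gt0, s_iter_gt0, x_gt0. Qed.

Lemma mstep_gt0 k : 0 < mstep k.
Proof. apply zprod_gt0, c_j_sub1_gt0. Qed.

Lemma nstep_gt0 k : 0 < nstep k.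
Proof. apply Rmult_lt_0_compat; [exact x_gt0|]. apply zprod_gt0, d_j_sub1_gt0. Qed.

Lemma mstep_pred k : mstep k = mstep (k - 1) * (c_j k x - 1).
Proof.
  unfold mstep. rewrite <- (Z.sub_add 1 k) at 1 3.
  apply zprod_succ. intros i. apply Rgt_not_eq, c_j_sub1_gt0.
Qed.

Lemma nstep_pred k : nstep k = nstep (k - 1) * (d_j k x - 1).
Proof.
  unfold nstep. rewrite <- (Z.sub_add 1 k) at 1 3.
  rewrite zprod_succ; [ring|]. intros i. apply Rgt_not_eq, d_j_sub1_gt0.
Qed.

Lemma nstep_mstep k : nstep k = mstep k * s_iter (k + 1) x.
Proof.
  unfold nstep. rewrite <- (zprod_unique _ (fun k => mstep k * s_iter (k + 1) x / x)).
  - field. lra.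
  - intros i. apply Rgt_not_eq, d_j_sub1_gt0.
  - simpl. field. lra.
  - intros j. rewrite (mstep_pred (j + 1)), Z.add_simpl_r, (s_iter_succ (j + 1)) by exact x_gt0.
    pose proof (dfun_cfun_sfun _ (s_iter_gt0 (j + 1) x x_gt0)) as K.
    unfold c_j, d_j. field_simplify_eq; [|lra].
    transitivity (mstep j * ((cfun (s_iter (j + 1) x) - 1) * sfun (s_iter (j + 1) x)));
      [ring | rewrite <- K; ring].
Qed.

Lemma ex_series_mdef k : ex_series (fun t : nat => mstep (k - 1 - Z.of_nat t)).
Proof.
  pose proof (s_iter_gt0 (k - 1) x x_gt0) as Hs.
  apply ex_series_ratio_vanishing with (2 / s_iter (k - 1) x); [intros; apply mstep_gt0|].
  intros t. set (j := (k - 1 - Z.of_nat t)%Z).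
  replace (k - 1 - Z.of_nat (S t))%Z with (j - 1)%Z by (unfold j; lia).
  rewrite (mstep_pred j). unfold c_j.
  set (y := s_iter j x). pose proof (mstep_gt0 (j - 1)).
  assert (Hy : 0 < y) by apply s_iter_gt0, x_gt0.
  assert (Hgrow : s_iter (k - 1) x * 2 ^ t <= y) by apply s_iter_sub_ge, x_gt0.
  pose proof (cfun_sub1_ge_half y Hy). pose proof (pow_lt 2 t ltac:(lra)).
  replace (mstep (j - 1) / (mstep (j - 1) * (cfun y - 1))) with (/ (cfun y - 1)) by (field; lra).
  apply Rle_trans with (2 / y).
  - apply Rmult_le_reg_r with ((cfun y - 1) * y); [nra|].
    field_simplify; lra.
  - rewrite pow_inv. unfold Rdiv. rewrite Rmult_assoc, <- Rinv_mult.
    apply Rmult_le_compat_l; [lra|]. apply Rinv_le_contravar; nra.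
Qed.

Lemma ex_series_ndef k : ex_series (fun t : nat => nstep (k + Z.of_nat t)).
Proof.
  apply ex_series_ratio_vanishing with (s_iter (k + 1) x); [intros; apply nstep_gt0|].
  intros t. replace (k + Z.of_nat (S t))%Z with (k + Z.of_nat t + 1)%Z by lia.
  rewrite (nstep_pred (k + Z.of_nat t + 1)), Z.add_simpl_r.
  pose proof (nstep_gt0 (k + Z.of_nat t)).
  replace (nstep (k + Z.of_nat t) * (d_j (k + Z.of_nat t + 1) x - 1) / nstep (k + Z.of_nat t))
    with (d_j (k + Z.of_nat t + 1) x - 1) by (field; lra).
  eapply Rle_trans; [apply dfun_sub1_le, s_iter_gt0, x_gt0|].
  replace (k + Z.of_nat t + 1)%Z with (k + 1 + Z.of_nat t)%Z by lia.
  apply s_iter_add_le, x_gt0.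
Qed.

Lemma mdef_increment k : mdef (k + 1) - mdef k = mstep k.
Proof.
  unfold mdef. rewrite (Series_incr_1 _ (ex_series_mdef (k + 1))).
  rewrite (Series_ext (fun t => mstep (k + 1 - 1 - Z.of_nat (S t)))
                      (fun t => mstep (k - 1 - Z.of_nat t))) by (intros t; f_equal; lia).
  replace (k + 1 - 1 - Z.of_nat 0)%Z with k by lia. ring.
Qed.

Lemma ndef_increment k : ndef k - ndef (k + 1) = nstep k.
Proof.
  unfold ndef. rewrite (Series_incr_1 _ (ex_series_ndef k)).
  rewrite (Series_ext (fun t => nstep (k + Z.of_nat (S t)))
                      (fun t => nstep (k + 1 + Z.of_nat t))) by (intros t; f_equal; lia).
  rewrite Z.add_0_r. ring.
Qed.

Lemma mdef_lim_minf : lim_minf mdef 0.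
Proof.
  apply is_lim_seq_ext with
    (fun k => Series (fun t => mstep (0 - 1 - Z.of_nat (k + t)%nat))).
  - intros k. apply Series_ext. intros t. f_equal. lia.
  - exact (Series_tail_vanishing _ (ex_series_mdef 0)).
Qed.

Lemma ndef_lim_pinf : lim_pinf ndef 0.
Proof.
  apply is_lim_seq_ext with
    (fun k => Series (fun t => nstep (0 + Z.of_nat (k + t)%nat))).
  - intros k. apply Series_ext. intros t. f_equal. lia.
  - exact (Series_tail_vanishing _ (ex_series_ndef 0)).
Qed.

Lemma eq_mdef m : (forall k, m (k + 1)%Z - m k = mstep k) -> lim_minf m 0 -> m = mdef.
Proof.
  intros Hd Hl.
  apply (eq_of_increments _ _ (fun k => (- Z.of_nat k)%Z)); [| exact Hl | exact mdef_lim_minf].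
  intros k. now rewrite Hd, mdef_increment.
Qed.

Lemma eq_ndef n : (forall k, n k - n (k + 1)%Z = nstep k) -> lim_pinf n 0 -> n = ndef.
Proof.
  intros Hd Hl. apply (eq_of_increments _ _ Z.of_nat); [| exact Hl | exact ndef_lim_pinf].
  intros k. specialize (Hd k). pose proof (ndef_increment k). lra.
Qed.

Lemma is_mdef_mdef : is_mdef x mdef.
Proof.
  split; [|split; [exact mdef_lim_minf|]].
  - intros k. pose proof (mdef_increment k). pose proof (mstep_gt0 k). lra.
  - exact mdef_increment.
Qed.

Lemma is_ndef_ndef : is_ndef x ndef.
Proof.
  split; [|split; [exact ndef_lim_pinf|]].
  - intros k. pose proof (ndef_increment k). pose proof (nstep_gt0 k). lra.
  - exact ndef_increment.
Qed.

Section Forward.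

Variables a b m n : Z -> R.
Hypothesis Hdef : default_sol a b m n.
Hypothesis Hratio : central_ratio m n = x.

Let Hpos : positive_sol a b m n := proj1 Hdef.

Lemma default_local_ratio j : local_ratio m n j = s_iter j x.
Proof.
  apply (Z_ind_both (fun j => local_ratio m n j = s_iter j x) 0); [exact Hratio|].
  intros k. rewrite (local_ratio_succ a b m n k Hpos), (s_iter_succ k x x_gt0).
  split; [intros ->; reflexivity|].
  apply sfun_inj; [apply (positive_sol_site a b m n k Hpos) | apply s_iter_gt0, x_gt0].
Qed.

Lemma default_increments k : m (k + 1)%Z - m k = mstep k /\ n k - n (k + 1)%Z = nstep k.
Proof.
  pose proof Hdef as [_ [_ [_ H01]]].
  assert (Hx1 : n (-1)%Z - n 0%Z = x).
  { unfold central_ratio in Hratio. rewrite H01 in Hratio. lra. }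
  assert (Hsite : forall j,
    m (j + 1 + 1)%Z - m (j + 1)%Z = (m (j + 1)%Z - m j) * (c_j (j + 1) x - 1) /\
    n (j + 1)%Z - n (j + 1 + 1)%Z = (n j - n (j + 1)%Z) * (d_j (j + 1) x - 1)).
  { intros j. destruct (positive_sol_site a b m n (j + 1) Hpos) as [_ [_ [Hp [Hu _]]]].
    rewrite Z.add_simpl_r in Hp, Hu.
    unfold c_j, d_j. rewrite <- default_local_ratio. split; assumption. }
  split.
  - apply (zprod_unique _ (fun k => m (k + 1)%Z - m k)); [| exact H01 | apply Hsite].
    intros i. apply Rgt_not_eq, c_j_sub1_gt0.
  - unfold nstep. rewrite <- (zprod_unique _ (fun k => (n k - n (k + 1)%Z) / x)).
    + field. lra.
    + intros i. apply Rgt_not_eq, d_j_sub1_gt0.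
    + simpl. rewrite Hx1. field. lra.
    + intros j. rewrite (proj2 (Hsite j)). field. lra.
Qed.

Lemma default_sol_eq : m = mdef /\ n = ndef /\ ab_from_mn a b m n.
Proof.
  pose proof Hdef as [_ [Hm [Hn _]]]. split; [|split].
  - apply eq_mdef; [intros k; apply default_increments | exact Hm].
  - apply eq_ndef; [intros k; apply default_increments | exact Hn].
  - exact (positive_sol_ab a b m n Hpos).
Qed.

End Forward.

Lemma default_sol_mdef_ndef a b : ab_from_mn a b mdef ndef ->
  default_sol a b mdef ndef /\ central_ratio mdef ndef = x.
Proof.
  intros Hab.
  assert (Dm : forall i, mdef i - mdef (i - 1)%Z = mstep (i - 1)).
  { intros i. rewrite <- mdef_increment, Z.sub_add. reflexivity. }
  assert (Dn : forall i, ndef (i - 1)%Z - ndef i = nstep (i - 1)).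
  { intros i. rewrite <- ndef_increment, Z.sub_add. reflexivity. }
  assert (Hsite : forall i, 0 < a i /\ 0 < b i /\
    site_eqs (a i) (b i) (mdef (i - 1)%Z) (mdef i) (mdef (i + 1)%Z)
             (ndef (i - 1)%Z) (ndef i) (ndef (i + 1)%Z)).
  { intros i. destruct (Hab i) as [ha hb].
    apply (site_backward (mstep (i - 1)) (s_iter i x)); try assumption.
    - apply mstep_gt0.
    - apply s_iter_gt0, x_gt0.
    - apply Dm.
    - rewrite mdef_increment. apply mstep_pred.
    - rewrite Dn, nstep_mstep, Z.sub_add. reflexivity.
    - rewrite ndef_increment, nstep_pred, nstep_mstep, Z.sub_add. reflexivity. }
  assert (H01 : mdef 0 - mdef (-1) = 1) by exact (Dm 0%Z).
  split; [split; [split|]|].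
  - intros i. destruct (Hsite i) as [HA [HB [e1 [e2 [e3 e4]]]]]. repeat split; lra.
  - intros i. split; apply Hsite.
  - exact (conj mdef_lim_minf (conj ndef_lim_pinf H01)).
  - unfold central_ratio. rewrite H01, (Dn 0%Z : ndef (-1) - ndef 0 = nstep (-1)).
    change (nstep (-1)) with (x * 1). field.
Qed.

End DefaultSolution.

Lemma ab_from_mn_unique a b a' b' m n :
  ab_from_mn a b m n -> ab_from_mn a' b' m n -> a = a' /\ b = b'.
Proof.
  intros H H'. split; apply functional_extensionality; intros i;
    destruct (H i) as [ha hb]; destruct (H' i) as [ha' hb']; congruence.
Qed.

Theorem mainTheorem10 (x : R) (hx : 0 < x) :
  (exists a b m n : Z -> R, default_sol a b m n /\ central_ratio m n = x) /\
  (forall a b m n a' b' m' n' : Z -> R,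
      default_sol a b m n -> central_ratio m n = x ->
      default_sol a' b' m' n' -> central_ratio m' n' = x ->
      a = a' /\ b = b' /\ m = m' /\ n = n') /\
  (forall a b m n : Z -> R,
      (default_sol a b m n /\ central_ratio m n = x) <->
      (is_mdef x m /\ is_ndef x n /\ ab_from_mn a b m n)).
Proof.
  split; [|split].
  - set (M := fun i => mdef x (i + 1)%Z - mdef x (i - 1)%Z).
    set (N := fun i => ndef x (i - 1)%Z - ndef x (i + 1)%Z).
    exists (fun i => M i ^ 2 * N i / (M i + N i) ^ 2),
           (fun i => M i * N i ^ 2 / (M i + N i) ^ 2), (mdef x), (ndef x).
    apply default_sol_mdef_ndef; [exact hx|]. intros i. split; reflexivity.
  - intros a b m n a' b' m' n' H1 H2 H3 H4.
    destruct (default_sol_eq x hx a b m n H1 H2) as [-> [-> Hab]].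
    destruct (default_sol_eq x hx a' b' m' n' H3 H4) as [-> [-> Hab']].
    destruct (ab_from_mn_unique _ _ _ _ _ _ Hab Hab'). auto.
  - intros a b m n. split.
    + intros [H1 H2]. destruct (default_sol_eq x hx a b m n H1 H2) as [-> [-> Hab]].
      auto using is_mdef_mdef, is_ndef_ndef.
    + intros [Hm [Hn Hab]].
      assert (Em : m = mdef x) by (destruct Hm as [_ [Hl Hd]]; exact (eq_mdef x hx m Hd Hl)).
      assert (En : n = ndef x) by (destruct Hn as [_ [Hl Hd]]; exact (eq_ndef x hx n Hd Hl)).
      subst m n. now apply default_sol_mdef_ndef.
Qed.
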